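(* $\mathcal M(\mathfrak g,\mu)=\mathcal M(\mathfrak g,\mu)^+\oplus\mathcal M(\mathfrak g,\mu)^0\oplus\mathcal M(\mathfrak g,\mu)^-$, where $\mathcal M(\mathfrak g,\mu)^\pm$ is the subalgebra generated by $\{x^\pm_{i,m}:i\in I,m\in\mathbb Z\}$ and $\mathcal M(\mathfrak g,\mu)^0$ is the subalgebra generated by $\{h_{i,m}:i\in I,m\in\mathbb Z\}$.
   Context: $I=\{0,\dots,\ell\}$, $A=(a_{ij})$ an affine GCM, $\mathfrak g$ its Kac–Moody algebra without derivation with Chevalley generators $\alpha_i^\vee$ and a nondegenerate-on-$\dot{\mathfrak h}$ normalized invariant form $\langle\cdot,\cdot\rangle$ (as in the loop realization; its values $\langle\alpha_i^\vee,\alpha_j^\vee\rangle$ are fixed complex numbers). $(\cdot,\cdot)$: the normalized invariant form on the root lattice $Q$ with $2(\alpha_i,\alpha_j)/(\alpha_i,\alpha_i)=a_{ij}$. $\mu$: a permutation of $I$ of order $N$ with $a_{\mu(i)\mu(j)}=a_{ij}$, assumed non-transitive ($\langle\mu\rangle$ not transitive on $I$); $\xi=e^{2\pi\sqrt{-1}/N}$; $\check\alpha_i=\frac1N\sum_k\alpha_{\mu^k(i)}$, $\check a_{ij}=2(\check\alpha_i,\check\alpha_j)/(\check\alpha_i,\check\alpha_i)$; $s_i=2$ if the $\mu$-orbit of $i$ is $\{i,\mu(i)\}$ with $a_{i\mu(i)}=-1$, else $s_i=1$. $\mathcal M(\mathfrak g,\mu)$: the Lie algebra generated by $h_{i,m},x^\pm_{i,m},c$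 ($i\in I,m\in\mathbb Z$) with relations for all $i,j,m,n$: (T0) $h_{\mu(i),m}=\xi^mh_{i,m}$, $x^\pm_{\mu(i),m}=\xi^mx^\pm_{i,m}$; (T1) $c$ central; (T2) $[h_{i,m},h_{j,n}]=\sum_{k\in\mathbb Z_N}mN\langle\alpha_i^\vee,\alpha^\vee_{\mu^k(j)}\rangle\delta_{m+n,0}\xi^{km}c$; (T3) $[h_{i,m},x^\pm_{j,n}]=\pm\sum_k a_{i\mu^k(j)}\xi^{km}x^\pm_{j,m+n}$; (T4) $[x^+_{i,m},x^-_{j,n}]=\sum_k\delta_{i,\mu^k(j)}(h_{j,m+n}+\frac{mN\langle\alpha_i^\vee,\alpha_i^\vee\rangle}{2}\delta_{m+n,0}c)\xi^{km}$; (T5) $(\mathrm{ad}\,x^\pm_{i,0})^{1-\check a_{ij}}(x^\pm_{j,m})=0$ if $\check a_{ij}\le0$; (T6) $[x^\pm_{i,m_1},[\cdots,[x^\pm_{i,m_{s_i}},x^\pm_{i,m_{s_i+1}}]\cdots]]=0$. *)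

From HB Require Import structures.
From mathcomp Require Import all_boot all_order all_fingroup all_algebra.
Set Implicit Arguments. Unset Strict Implicit. Unset Printing Implicit Defensive.
Import Order.TTheory GRing.Theory Num.Theory.
Local Open Scope ring_scope.

Record lieAlgebra (R : fieldType) := LieAlgebra {
  lie_sort :> lmodType R;
  lie_br : lie_sort -> lie_sort -> lie_sort;
  lie_brl : forall (a : R) (x y z : lie_sort),
      lie_br (a *: x + y) z = a *: lie_br x z + lie_br y z;
  lie_brr : forall (a : R) (x y z : lie_sort),
      lie_br z (a *: x + y) = a *: lie_br z x + lie_br z y;
  lie_alt : forall x : lie_sort, lie_br x x = 0;
  lie_jacobi : forall x y z : lie_sort,
      lie_br x (lie_br y z) + lie_br y (lie_br z x) + lie_br z (lie_br x y) = 0 }.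

Arguments lie_br {R L} : rename.

Definition lie_hom (R : fieldType) (L L' : lieAlgebra R) (phi : L -> L') : Prop :=
  (forall (a : R) (x y : L), phi (a *: x + y) = a *: phi x + phi y) /\
  (forall x y : L, phi (lie_br x y) = lie_br (phi x) (phi y)).

Definition lie_closed (R : fieldType) (L : lieAlgebra R) (P : L -> Prop) : Prop :=
  [/\ P 0,
      (forall (a : R) (x y : L), P x -> P y -> P (a *: x + y)) &
      (forall x y : L, P x -> P y -> P (lie_br x y))].

Definition lie_generated (R : fieldType) (L : lieAlgebra R) (S : L -> Prop) (x : L)
  : Prop :=
  forall P : L -> Prop, lie_closed P -> (forall y, S y -> P y) -> P x.

Definition direct_sum3 (R : fieldType) (L : lieAlgebra R) (U V W : L -> Prop) : Prop :=
  (forall x : L, exists u v w, [/\ U u, V v, W w & x = u + v + w]) /\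
  (forall u v w : L, U u -> V v -> W w -> u + v + w = 0 ->
      [/\ u = 0, v = 0 & w = 0]).

Definition is_GCM (n : nat) (A : 'M[int]_n) : Prop :=
  [/\ forall i, A i i = 2,
      forall i j, i != j -> A i j <= 0 &
      forall i j, A i j = 0 <-> A j i = 0].

Definition indecomposable (n : nat) (A : 'M[int]_n) : Prop :=
  forall S : {set 'I_n}, S != set0 -> S != setT ->
    exists i j, [/\ i \in S, j \notin S & A i j != 0].

(* Kac, Infinite-dim. Lie algebras, Thm 4.3, type (Aff) (vectors taken rational,
   which is equivalent for an integer matrix). *)
Definition is_affine_GCM (n : nat) (A : 'M[int]_n) : Prop :=
  let Aq := map_mx (fun z : int => z%:~R : rat) A in
  [/\ is_GCM A, indecomposable A,
      (\rank Aq).+1 = n,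
      exists u : 'cV[rat]_n, (forall i, 0 < u i 0) /\ Aq *m u = 0 &
      forall v : 'cV[rat]_n, (forall i, 0 <= (Aq *m v) i 0) -> Aq *m v = 0].

Definition marks_of (n : nat) (A : 'M[int]_n) (a : 'I_n -> nat) : Prop :=
  [/\ forall i, (0 < a i)%N,
      forall i, \sum_j A i j * (a j)%:Z = 0 &
      \big[gcdn/0%N]_i a i = 1%N].

Definition comarks_of (n : nat) (A : 'M[int]_n) (av : 'I_n -> nat) : Prop :=
  [/\ forall j, (0 < av j)%N,
      forall j, \sum_i (av i)%:Z * A i j = 0 &
      \big[gcdn/0%N]_i av i = 1%N].

Section Data.
Variables (n : nat) (A : 'M[int]_n) (a av : 'I_n -> nat) (mu : {perm 'I_n}).

(* normalized invariant form on coroots: <alpha_i^vee, alpha_j^vee> = a_j / a_j^vee * a_ij *)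
Definition coroot_form (C : fieldType) (i j : 'I_n) : C :=
  (a j)%:R / (av j)%:R * (A i j)%:~R.

(* normalized invariant form on roots: (alpha_i, alpha_j) = a_i^vee / a_i * a_ij *)
Definition root_form (i j : 'I_n) : rat := (av i)%:R / (a i)%:R * (A i j)%:~R.

Definition ordN : nat := #[mu]%g.

(* (check alpha_i, check alpha_j), check alpha_i = 1/N sum_k alpha_{mu^k i} *)
Definition check_form (i j : 'I_n) : rat :=
  \sum_(k < ordN) \sum_(l < ordN)
     root_form ((mu ^+ k)%g i) ((mu ^+ l)%g j) / (ordN%:R ^+ 2).

Definition check_a (i j : 'I_n) : rat := 2 * check_form i j / check_form i i.

(* exponent 1 - check a_ij in (T5) (check a_ij is an integer) *)
Definition T5_exp (i j : 'I_n) : nat := `|1 - Num.floor (check_a i j)|%N.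

Definition s_idx (i : 'I_n) : nat :=
  if [&& (mu ^+ 2)%g i == i, mu i != i & A i (mu i) == -1] then 2 else 1.

Definition not_transitive : Prop := exists i j : 'I_n, forall k, (mu ^+ k)%g i != j.

Definition diagram_auto : Prop := forall i j, A (mu i) (mu j) = A i j.
End Data.

Inductive Mgen (n : nat) : Type :=
  | Gh of 'I_n & int
  | Gxp of 'I_n & int
  | Gxm of 'I_n & int
  | Gc.

Definition nested_br (C : fieldType) (L : lieAlgebra C) (x : int -> L)
   (m0 : int) (ms : seq int) : L :=
  foldr (fun m acc => lie_br (x m) acc) (x m0) ms.

Section Relations.
Variables (C : fieldType) (n : nat) (A : 'M[int]_n) (a av : 'I_n -> nat)
          (mu : {perm 'I_n}) (xi : C) (L : lieAlgebra C) (f : Mgen n -> L).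

Let N := ordN mu.
Let B : 'I_n -> 'I_n -> C := @coroot_form n A a av C.
Let h i m := f (Gh i m).
Let xp i m := f (Gxp i m).
Let xm i m := f (Gxm i m).
Let c := f (Gc n).
Let xiz (k : nat) (m : int) : C := xi ^ (k%:Z * m).
Let dlt (m n : int) : C := (m + n == 0)%:R.

Definition M_relations : Prop :=
  (* T0 *)
      (forall i m, h (mu i) m = xi ^ m *: h i m /\
                   xp (mu i) m = xi ^ m *: xp i m /\
                   xm (mu i) m = xi ^ m *: xm i m) /\
      (* T1 *)
      (forall y : L, lie_br c y = 0) /\
      (* T2 *)
      (forall i j m k, lie_br (h i m) (h j k) =
         (\sum_(q < N) (m * N%:Z)%:~R * B i ((mu ^+ q)%g j) * dlt m k * xiz q m) *: c) /\
      (* T3 *)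
      (forall i j m k,
         lie_br (h i m) (xp j k) =
           (\sum_(q < N) (A i ((mu ^+ q)%g j))%:~R * xiz q m) *: xp j (m + k) /\
         lie_br (h i m) (xm j k) =
           - ((\sum_(q < N) (A i ((mu ^+ q)%g j))%:~R * xiz q m) *: xm j (m + k))) /\
      (* T4 *)
      (forall i j m k, lie_br (xp i m) (xm j k) =
         \sum_(q < N) ((i == (mu ^+ q)%g j)%:R * xiz q m) *:
            (h j (m + k) + ((m * N%:Z)%:~R * B i i / 2 * dlt m k) *: c)) /\
      (* T5 *)
      (forall i j m, check_a A a av mu i j <= 0 ->
         iter (T5_exp A a av mu i j) (lie_br (xp i 0)) (xp j m) = 0 /\
         iter (T5_exp A a av mu i j) (lie_br (xm i 0)) (xm j m) = 0) /\
      (* T6 *)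
      (forall i m0 (ms : seq int), size ms = s_idx A mu i ->
         nested_br (xp i) m0 ms = 0 /\ nested_br (xm i) m0 ms = 0).

End Relations.

Definition is_M_presentation (C : fieldType) (n : nat) (A : 'M[int]_n)
    (a av : 'I_n -> nat) (mu : {perm 'I_n}) (xi : C)
    (L : lieAlgebra C) (f : Mgen n -> L) : Prop :=
  M_relations A a av mu xi f /\
  forall (L' : lieAlgebra C) (f' : Mgen n -> L'),
    M_relations A a av mu xi f' ->
    exists phi : L -> L',
      [/\ lie_hom phi, (forall g, phi (f g) = f' g) &
          forall psi : L -> L', lie_hom psi -> (forall g, psi (f g) = f' g) ->
            forall x, psi x = phi x].

Definition M_plus (C : fieldType) (n : nat) (L : lieAlgebra C) (f : Mgen n -> L) :=
  lie_generated (fun y => exists i m, y = f (Gxp i m)).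
Definition M_minus (C : fieldType) (n : nat) (L : lieAlgebra C) (f : Mgen n -> L) :=
  lie_generated (fun y => exists i m, y = f (Gxm i m)).
Definition M_zero (C : fieldType) (n : nat) (L : lieAlgebra C) (f : Mgen n -> L) :=
  lie_generated (fun y => exists i m, y = f (Gh i m)).

From HB Require Import structures.
From mathcomp Require Import all_boot all_order all_fingroup all_algebra.
From mathcomp Require Import zify.
From Stdlib Require Import ClassicalEpsilon.
Set Implicit Arguments. Unset Strict Implicit. Unset Printing Implicit Defensive.
Import Order.TTheory GRing.Theory Num.Theory.
Local Open Scope ring_scope.

(* The central element c lies in M^0: relation (T2) gives
   [h_{i,N}, h_{i,-N}] = N^2 (sum_q <alpha_i^vee, alpha_{mu^q i}^vee>) c, and
   since mu is not transitive some vertex i makes this orbit sum positive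
   (an affine matrix A with A v <= 0 has A v = 0, and A is indecomposable).
   Then M^+ + M^0 + M^- contains the generators and is stable under ad of
   every generator, by (T1), (T3), (T4) and the Jacobi identity, so it is
   all of M(g, mu), which is generated by its generators.

   Rescaling x^+ by t and x^- by t^-1 preserves the relations,
   so gives automorphisms phi_t (t <> 0).  Elements of M^+ (resp. M^-) are
   sums of pieces of positive (resp. negative) degree, on which phi_t acts by
   t^degree, while M^0 is fixed.  If u + v + w = 0, applying phi_t yields a
   Laurent polynomial vanishing at every t <> 0, whose components (collected
   by sign of degree: u, v, w) must vanish by a Vandermonde argument. *)

Section BracketCalculus.
Variables (R : fieldType) (L : lieAlgebra R).
Implicit Types (x y z : L) (a : R).

Lemma brDl x y z : lie_br (x + y) z = lie_br x z + lie_br y z.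
Proof. by have := lie_brl 1 x y z; rewrite !scale1r. Qed.

Lemma brDr x y z : lie_br z (x + y) = lie_br z x + lie_br z y.
Proof. by have := lie_brr 1 x y z; rewrite !scale1r. Qed.

Lemma br0l y : lie_br 0 y = 0.
Proof. by apply: (@addrI _ (lie_br 0 y)); rewrite -brDl !addr0. Qed.

Lemma br0r y : lie_br y 0 = 0.
Proof. by apply: (@addrI _ (lie_br y 0)); rewrite -brDr !addr0. Qed.

Lemma brZl a x z : lie_br (a *: x) z = a *: lie_br x z.
Proof. by have := lie_brl a x 0 z; rewrite !addr0 br0l addr0. Qed.

Lemma brZr a x z : lie_br z (a *: x) = a *: lie_br z x.
Proof. by have := lie_brr a x 0 z; rewrite !addr0 br0r addr0. Qed.

Lemma brNr x z : lie_br z (- x) = - lie_br z x.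
Proof. by rewrite -scaleN1r brZr scaleN1r. Qed.

(* antisymmetry, from lie_alt applied to x + y *)
Lemma brC x y : lie_br y x = - lie_br x y.
Proof.
have := lie_alt (x + y); rewrite brDl !brDr !lie_alt add0r addr0.
by move/eqP; rewrite addr_eq0 => /eqP ->; rewrite opprK.
Qed.

Lemma brJ x y z : lie_br x (lie_br y z) = lie_br (lie_br x y) z + lie_br y (lie_br x z).
Proof.
have := lie_jacobi x y z.
rewrite (brC z x) brNr (brC (lie_br x y) z) => /eqP.
by rewrite -addrA addr_eq0 => /eqP ->; rewrite opprD !opprK addrC.
Qed.

Lemma brJl x y z :
  lie_br (lie_br x y) z = lie_br x (lie_br y z) - lie_br y (lie_br x z).
Proof. by rewrite brJ addrK. Qed.

Lemma brsuml (I : Type) (r : seq I) (F : I -> L) z :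
  lie_br (\sum_(i <- r) F i) z = \sum_(i <- r) lie_br (F i) z.
Proof. by elim: r => [|i r IH]; rewrite ?big_nil ?br0l // !big_cons brDl IH. Qed.

Lemma brsumr (I : Type) (r : seq I) (F : I -> L) z :
  lie_br z (\sum_(i <- r) F i) = \sum_(i <- r) lie_br z (F i).
Proof. by elim: r => [|i r IH]; rewrite ?big_nil ?br0r // !big_cons brDr IH. Qed.

Lemma iter_brZ k (s r : R) (y z : L) :
  iter k (lie_br (s *: y)) (r *: z) = (s ^+ k * r) *: iter k (lie_br y) z.
Proof.
elim: k => [|k IH] /=; first by rewrite expr0 mul1r.
by rewrite IH brZl brZr scalerA exprS -mulrA.
Qed.

Lemma nested_brZ (s : R) (x : int -> L) m0 ms :
  nested_br (fun m => s *: x m) m0 ms = s ^+ (size ms).+1 *: nested_br x m0 ms.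
Proof.
elim: ms => [|m ms IH] /=; first by rewrite expr1.
by rewrite IH brZl brZr scalerA -exprS.
Qed.
End BracketCalculus.

Section Homomorphisms.
Variables (R : fieldType) (L1 L2 : lieAlgebra R) (psi : L1 -> L2).
Hypothesis psi_hom : lie_hom psi.

Lemma homD x y : psi (x + y) = psi x + psi y.
Proof. by case: psi_hom => lin _; have := lin 1 x y; rewrite !scale1r. Qed.

Lemma hom0 : psi 0 = 0.
Proof. by apply: (@addrI _ (psi 0)); rewrite -homD !addr0. Qed.

Lemma homZ a x : psi (a *: x) = a *: psi x.
Proof. by case: psi_hom => lin _; have := lin a x 0; rewrite !addr0 hom0 addr0. Qed.

Lemma homN x : psi (- x) = - psi x.
Proof. by rewrite -scaleN1r homZ scaleN1r. Qed.

Lemma homBr x y : psi (lie_br x y) = lie_br (psi x) (psi y).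
Proof. by case: psi_hom. Qed.

Lemma homsum (I : Type) (r : seq I) (F : I -> L1) :
  psi (\sum_(i <- r) F i) = \sum_(i <- r) psi (F i).
Proof. by elim: r => [|i r IH]; rewrite ?big_nil ?hom0 // !big_cons homD IH. Qed.

Lemma hom_iter k y z : psi (iter k (lie_br y) z) = iter k (lie_br (psi y)) (psi z).
Proof. by elim: k => //= k IH; rewrite homBr IH. Qed.

Lemma hom_nested (x : int -> L1) m0 ms :
  psi (nested_br x m0 ms) = nested_br (fun m => psi (x m)) m0 ms.
Proof. by elim: ms => //= m ms IH; rewrite homBr IH. Qed.

(* the defining relations of M(g, mu) can be pulled back along an injective
   homomorphism; this is how relations pass to a subalgebra *)
Lemma relations_reflect (n : nat) (A : 'M[int]_n) a av mu xi (f : Mgen n -> L1) :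
  injective psi ->
  M_relations A a av mu xi (fun g => psi (f g)) -> M_relations A a av mu xi f.
Proof.
move=> inj [T0 [T1 [T2 [T3 [T4 [T5 T6]]]]]].
split; [|split; [|split; [|split; [|split; [|split]]]]].
- by move=> i m; have [E1 [E2 E3]] := T0 i m; split; [|split]; apply: inj; rewrite homZ.
- by move=> y; apply: inj; rewrite homBr hom0 T1.
- by move=> i j m k; apply: inj; rewrite homBr homZ T2.
- move=> i j m k; have [E1 E2] := T3 i j m k.
  by split; apply: inj; rewrite homBr ?homN homZ.
- move=> i j m k; apply: inj; rewrite homBr T4 homsum.
  by apply: eq_bigr => q _; rewrite homZ homD homZ.
- move=> i j m H; have [E1 E2] := T5 i j m H.
  by split; apply: inj; rewrite hom_iter hom0.
- move=> i m0 ms H; have [E1 E2] := T6 i m0 ms H.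
  by split; apply: inj; rewrite hom_nested hom0.
Qed.
End Homomorphisms.

Lemma hom_id (R : fieldType) (L : lieAlgebra R) : lie_hom (fun x : L => x).
Proof. by []. Qed.

Lemma hom_comp (R : fieldType) (L1 L2 L3 : lieAlgebra R) (p : L1 -> L2) (q : L2 -> L3) :
  lie_hom p -> lie_hom q -> lie_hom (fun x => q (p x)).
Proof.
move=> hp hq; split=> [a x y|x y]; last by rewrite (homBr hp) (homBr hq).
by rewrite (homD hp) (homZ hp) (homD hq) (homZ hq).
Qed.

Section GeneratedSubalgebras.
Variables (R : fieldType) (L : lieAlgebra R).
Implicit Types (S T P Q : L -> Prop) (x y : L).

Definition subspace P : Prop :=
  P 0 /\ forall (a : R) x y, P x -> P y -> P (a *: x + y).

Definition sum_of P Q x : Prop := exists y z, [/\ P y, Q z & x = y + z].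

Lemma lie_closed_subspace P : lie_closed P -> subspace P.
Proof. by case. Qed.

Lemma subspace_lin P {a : R} x y : subspace P -> P x -> P y -> P (a *: x + y).
Proof. by case=> _; apply. Qed.

Lemma subspaceD P x y : subspace P -> P x -> P y -> P (x + y).
Proof. by case=> _ lin px py; rewrite -[x]scale1r; apply: lin. Qed.

Lemma subspaceZ P {a : R} x : subspace P -> P x -> P (a *: x).
Proof. by case=> P0 lin px; rewrite -[_ *: _]addr0; apply: lin. Qed.

Lemma subspaceN P x : subspace P -> P x -> P (- x).
Proof. by move=> sP px; rewrite -scaleN1r; apply: subspaceZ. Qed.

Lemma subspace_sum P (I : Type) (r : seq I) (F : I -> L) :
  subspace P -> (forall i, P (F i)) -> P (\sum_(i <- r) F i).
Proof.
move=> sP PF; elim: r => [|i r IH]; first by rewrite big_nil; case: sP.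
by rewrite big_cons; apply: subspaceD.
Qed.

Lemma subspace_sum_of P Q : subspace P -> subspace Q -> subspace (sum_of P Q).
Proof.
move=> sP sQ; split; first by exists 0, 0; rewrite addr0; split=> //; [case: sP|case: sQ].
move=> a x y [x1 [x2 [p1 q1 ->]]] [y1 [y2 [p2 q2 ->]]].
exists (a *: x1 + y1), (a *: x2 + y2); split; try exact: subspace_lin.
by rewrite scalerDr addrACA.
Qed.

Lemma gen_sub S y : S y -> lie_generated S y.
Proof. by move=> Sy P _; apply. Qed.

Lemma gen_closed S : lie_closed (lie_generated S).
Proof.
split=> [P [] //|a x y gx gy P cP SP|x y gx gy P cP SP];
  case: (cP) => _ lin br; [apply: lin|apply: br]; by [apply: gx|apply: gy].
Qed.

Lemma gen_subspace S : subspace (lie_generated S).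
Proof. exact/lie_closed_subspace/gen_closed. Qed.

Lemma gen_br S x y : lie_generated S x -> lie_generated S y -> lie_generated S (lie_br x y).
Proof. by case: (gen_closed S) => _ _; apply. Qed.

Lemma gen_ind S Q :
  Q 0 ->
  (forall (a : R) x y, lie_generated S x -> lie_generated S y -> Q x -> Q y ->
     Q (a *: x + y)) ->
  (forall x y, lie_generated S x -> lie_generated S y -> Q x -> Q y ->
     Q (lie_br x y)) ->
  (forall y, S y -> Q y) ->
  forall x, lie_generated S x -> Q x.
Proof.
move=> Q0 Qlin Qbr QS x gx.
suff [] : lie_generated S x /\ Q x by [].
apply: (gx (fun x => lie_generated S x /\ Q x)) => [|y Sy];
  last by split; [apply: gen_sub|apply: QS].
have [g0 glin gbr] := gen_closed S.
split=> [//|a y z [gy Qy] [gz Qz]|y z [gy Qy] [gz Qz]]; split; by auto.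
Qed.

Lemma ad_stable_gen S V :
  subspace V -> (forall s y, S s -> V y -> V (lie_br s y)) ->
  forall x, lie_generated S x -> forall y, V y -> V (lie_br x y).
Proof.
move=> sV adS.
apply: (@gen_ind S (fun x => forall y, V y -> V (lie_br x y)))
  => [y _|a x1 x2 _ _ V1 V2 y Vy|x1 x2 _ _ V1 V2 y Vy|s Ss y Vy];
  last exact: adS Ss Vy.
- by rewrite br0l; case: sV.
- by rewrite lie_brl; apply: subspace_lin sV _ _; auto.
- by rewrite brJl -[X in _ + X]scaleN1r addrC; apply: subspace_lin sV _ _; auto.
Qed.

Lemma gen_in_ad_stable S V :
  subspace V -> (forall s, S s -> V s) -> (forall s y, S s -> V y -> V (lie_br s y)) ->
  forall x, lie_generated S x -> V x.
Proof.
move=> sV SV adS; apply: (@gen_ind S V) => //; first by case: sV.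
- by move=> a x y _ _ Vx Vy; apply: subspace_lin.
- by move=> x y gx _ _ Vy; exact: ad_stable_gen gx _ Vy.
Qed.

Lemma ad_gen_gen s T :
  (forall t, T t -> lie_generated T (lie_br s t)) ->
  forall y, lie_generated T y -> lie_generated T (lie_br s y).
Proof.
move=> sT; apply: (@gen_ind T (fun y => lie_generated T (lie_br s y))) => //.
- by rewrite br0r; case: (gen_closed T).
- by move=> a x y _ _ gx gy; rewrite lie_brr; apply: subspace_lin (gen_subspace T) _ _.
- by move=> x y gx gy gsx gsy; rewrite brJ; apply: subspaceD (gen_subspace T) _ _;
    apply: gen_br.
Qed.

Lemma gen_br_gen S T :
  (forall s t, S s -> T t -> lie_generated T (lie_br s t)) ->
  forall x y, lie_generated S x -> lie_generated T y -> lie_generated T (lie_br x y).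
Proof.
move=> ST x y gx; apply: (@ad_stable_gen S _ (gen_subspace T) _ x gx) => s {}y Ss.
by apply: ad_gen_gen => t; apply: ST.
Qed.

Lemma br_gen_sum S T H :
  subspace H ->
  (forall s t, S s -> T t -> H (lie_br s t)) ->
  (forall h y, H h -> lie_generated T y -> lie_generated T (lie_br h y)) ->
  forall s y, S s -> lie_generated T y -> sum_of H (lie_generated T) (lie_br s y).
Proof.
move=> sH ST HT s y Ss; have sHT := subspace_sum_of sH (gen_subspace T).
move: y; apply: (@gen_ind T (fun y => sum_of H (lie_generated T) (lie_br s y)))
  => [|a x y _ _ Sx Sy|x y gx gy [h1 [w1 [H1 g1 E1]]] [h2 [w2 [H2 g2 E2]]]|t Tt].
- by rewrite br0r; case: sHT.
- by rewrite lie_brr; apply: subspace_lin.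
- exists 0, (lie_br (h1 + w1) y + lie_br x (h2 + w2)).
  rewrite add0r brJ E1 E2; split=> //; first by case: sH.
  have sG := gen_subspace T.
  rewrite !brDl !brDr (brC h2); do 2 apply: (subspaceD sG);
    by [apply: HT|apply: gen_br|apply: (subspaceN sG); apply: HT].
- by exists (lie_br s t), 0; rewrite addr0; split=> //; [apply: ST|case: (gen_closed T)].
Qed.
End GeneratedSubalgebras.

Section SubLieAlgebra.
Variables (R : fieldType) (L : lieAlgebra R) (P : L -> Prop).
Hypothesis closedP : lie_closed P.

(* membership decided classically, as subtypes are cut out by boolean
   predicates *)
Definition in_sub (x : L) : bool :=
  if excluded_middle_informative (P x) then true else false.

Lemma in_subP x : in_sub x <-> P x.
Proof. by rewrite /in_sub; case: excluded_middle_informative. Qed.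

Definition sub_carrier := {x : L | in_sub x}.
HB.instance Definition _ := [isSub for (@sval L (fun x => in_sub x) : sub_carrier -> L)].
HB.instance Definition _ := [Choice of sub_carrier by <:].

Let inP x : in_sub x -> P x := proj1 (in_subP x).
Let Pin x : P x -> in_sub x := proj2 (in_subP x).

(* every linear operation on the subalgebra is an instance of a x + y *)
Definition sub_lin (a : R) (x y : sub_carrier) : sub_carrier :=
  exist _ (a *: val x + val y)
    (Pin (subspace_lin (a := a) (lie_closed_subspace closedP)
            (inP (valP x)) (inP (valP y)))).

Definition sub_zero : sub_carrier :=
  exist _ 0 (Pin (proj1 (lie_closed_subspace closedP))).
Definition sub_add (x y : sub_carrier) : sub_carrier := sub_lin 1 x y.
Definition sub_opp (x : sub_carrier) : sub_carrier := sub_lin (-1) x sub_zero.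
Definition sub_scale (a : R) (x : sub_carrier) : sub_carrier := sub_lin a x sub_zero.
Definition sub_br (x y : sub_carrier) : sub_carrier :=
  exist _ (lie_br (val x) (val y))
    (Pin (let: And3 _ _ br := closedP in br _ _ (inP (valP x)) (inP (valP y)))).

Lemma sub_addA : associative sub_add.
Proof. by move=> x y z; apply: val_inj; rewrite /= !scale1r addrA. Qed.
Lemma sub_addC : commutative sub_add.
Proof. by move=> x y; apply: val_inj; rewrite /= !scale1r addrC. Qed.
Lemma sub_add0 : left_id sub_zero sub_add.
Proof. by move=> x; apply: val_inj; rewrite /= scale1r add0r. Qed.
Lemma sub_addN : left_inverse sub_zero sub_opp sub_add.
Proof. by move=> x; apply: val_inj; rewrite /= scale1r addr0 scaleN1r addNr. Qed.
HB.instance Definition _ :=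
  GRing.isZmodule.Build sub_carrier sub_addA sub_addC sub_add0 sub_addN.

Lemma sub_scaleA a b x : sub_scale a (sub_scale b x) = sub_scale (a * b) x.
Proof. by apply: val_inj; rewrite /= !addr0 scalerA. Qed.
Lemma sub_scale1 : left_id 1 sub_scale.
Proof. by move=> x; apply: val_inj; rewrite /= addr0 scale1r. Qed.
Lemma sub_scaleDr : right_distributive sub_scale +%R.
Proof. by move=> a x y; apply: val_inj; rewrite /= !addr0 !scale1r scalerDr. Qed.
Lemma sub_scaleDl x : {morph sub_scale^~ x : a b / a + b}.
Proof. by move=> a b; apply: val_inj; rewrite /= !addr0 scale1r scalerDl. Qed.
HB.instance Definition _ := GRing.Zmodule_isLmodule.Build R sub_carrier
  sub_scaleA sub_scale1 sub_scaleDr sub_scaleDl.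

Lemma sub_brl a (x y z : sub_carrier) :
  sub_br (a *: x + y) z = a *: sub_br x z + sub_br y z.
Proof. by apply: val_inj; rewrite /= !addr0 !scale1r lie_brl. Qed.
Lemma sub_brr a (x y z : sub_carrier) :
  sub_br z (a *: x + y) = a *: sub_br z x + sub_br z y.
Proof. by apply: val_inj; rewrite /= !addr0 !scale1r lie_brr. Qed.
Lemma sub_alt (x : sub_carrier) : sub_br x x = 0.
Proof. by apply: val_inj; rewrite /= lie_alt. Qed.
Lemma sub_jacobi (x y z : sub_carrier) :
  sub_br x (sub_br y z) + sub_br y (sub_br z x) + sub_br z (sub_br x y) = 0.
Proof. by apply: val_inj; rewrite /= !scale1r lie_jacobi. Qed.

Definition sub_lie : lieAlgebra R :=
  @LieAlgebra R sub_carrier sub_br sub_brl sub_brr sub_alt sub_jacobi.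

Lemma sub_val_hom : lie_hom (fun x : sub_lie => val x).
Proof. by split=> [a x y|//] /=; rewrite !addr0 scale1r. Qed.
End SubLieAlgebra.

Section Presentation.
Variables (C : fieldType) (n : nat) (A : 'M[int]_n) (a av : 'I_n -> nat)
  (mu : {perm 'I_n}) (xi : C) (L : lieAlgebra C) (f : Mgen n -> L).

(* a presented Lie algebra is generated by its generators: the universal map
   into the subalgebra they generate, composed with the inclusion, agrees on
   generators with the identity of L, hence equals it *)
Lemma presentation_generated :
  is_M_presentation A a av mu xi f ->
  forall x, lie_generated (fun y => exists g, y = f g) x.
Proof.
move=> [rel univ] x; set S := fun y => exists g, y = f g.
have closedS := gen_closed S.
pose f_sub (g : Mgen n) : sub_lie closedS :=
  exist _ (f g) (proj2 (in_subP _ (f g)) (gen_sub (ex_intro _ g erefl))).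
have rel_sub : M_relations A a av mu xi f_sub.
  by apply: (relations_reflect (sub_val_hom closedS)) => //; exact: val_inj.
have [phi [hphi phi_f _]] := univ _ f_sub rel_sub.
have [phi0 [_ _ unique]] := univ L f rel.
have phi_id : val (phi x) = x.
  rewrite (unique _ (hom_comp hphi (sub_val_hom closedS)) (fun g => f_equal val (phi_f g))).
  exact: esym (unique _ (hom_id L) (fun g => erefl) x).
by rewrite -phi_id; apply/in_subP; exact: valP.
Qed.

(* rescaling x^+ by t and x^- by t^-1 preserves the relations (T0)-(T6);
   this yields the grading automorphisms of M(g, mu) *)
Definition rescale (t : C) (g : Mgen n) : L :=
  match g with
  | Gxp i m => t *: f (Gxp i m)
  | Gxm i m => t^-1 *: f (Gxm i m)
  | _ => f g
  end.

Lemma rescale_relations t :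
  t != 0 -> M_relations A a av mu xi f -> M_relations A a av mu xi (rescale t).
Proof.
move=> t0 [T0 [T1 [T2 [T3 [T4 [T5 T6]]]]]].
split; [|split; [|split; [|split; [|split; [|split]]]]] => //=.
- move=> i m; have [E1 [E2 E3]] := T0 i m.
  by split; [|split]; rewrite ?E1 ?E2 ?E3 // !scalerA mulrC.
- move=> i j m k; have [E1 E2] := T3 i j m k.
  by rewrite !brZr E1 E2 scalerN !scalerA !(mulrC t) (mulrC t^-1).
- by move=> i j m k; rewrite brZl brZr scalerA mulfV // scale1r; exact: T4.
- by move=> i j m H; have [E1 E2] := T5 i j m H; rewrite !iter_brZ E1 E2 !scaler0.
- by move=> i m0 ms H; have [E1 E2] := T6 i m0 ms H; rewrite !nested_brZ E1 E2 !scaler0.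
Qed.
End Presentation.

Section TriangularSpan.
Variables (C : fieldType) (n : nat) (A : 'M[int]_n) (a av : 'I_n -> nat)
  (mu : {perm 'I_n}) (xi : C) (L : lieAlgebra C) (f : Mgen n -> L).
Hypothesis rel : M_relations A a av mu xi f.
Hypothesis central_zero : M_zero f (f (Gc n)).

Let Mp := M_plus f.
Let M0 := M_zero f.
Let Mm := M_minus f.
Let sp : subspace Mp := gen_subspace _.
Let s0 : subspace M0 := gen_subspace _.
Let sm : subspace Mm := gen_subspace _.
Let p0 : Mp 0 := proj1 sp.
Let z0 : M0 0 := proj1 s0.
Let m0 : Mm 0 := proj1 sm.

Lemma zero_br_plus v u : M0 v -> Mp u -> Mp (lie_br v u).
Proof.
apply: gen_br_gen => _ _ [i [m ->]] [j [k ->]]; have [_ [_ [_ [T3 _]]]] := rel.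
by rewrite (proj1 (T3 i j m k)); apply: (subspaceZ sp); apply: gen_sub; exists j, (m + k).
Qed.

Lemma zero_br_minus v w : M0 v -> Mm w -> Mm (lie_br v w).
Proof.
apply: gen_br_gen => _ _ [i [m ->]] [j [k ->]]; have [_ [_ [_ [T3 _]]]] := rel.
rewrite (proj2 (T3 i j m k)); apply: (subspaceN sm); apply: (subspaceZ sm).
by apply: gen_sub; exists j, (m + k).
Qed.

Lemma plus_br_minus_zero i m j k : M0 (lie_br (f (Gxp i m)) (f (Gxm j k))).
Proof.
have [_ [_ [_ [_ [T4 _]]]]] := rel.
rewrite T4; apply: (subspace_sum _ s0) => q; apply: (subspaceZ s0).
apply: (subspaceD s0); last exact: (subspaceZ s0).
by apply: gen_sub; exists j, (m + k).
Qed.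

Lemma plus_br_minus i m w : Mm w -> sum_of M0 Mm (lie_br (f (Gxp i m)) w).
Proof.
apply: (br_gen_sum (S := fun y => exists i m, y = f (Gxp i m)) s0); last by exists i, m.
- by move=> _ _ [i' [m' ->]] [j [k ->]]; exact: plus_br_minus_zero.
- exact: zero_br_minus.
Qed.

Lemma minus_br_plus i m u : Mp u -> sum_of M0 Mp (lie_br (f (Gxm i m)) u).
Proof.
apply: (br_gen_sum (S := fun y => exists i m, y = f (Gxm i m)) s0); last by exists i, m.
- move=> _ _ [i' [m' ->]] [j [k ->]].
  by rewrite brC; apply: (subspaceN s0); exact: plus_br_minus_zero.
- exact: zero_br_plus.
Qed.

Definition triangular : L -> Prop := sum_of (sum_of Mp M0) Mm.

Let st : subspace triangular := subspace_sum_of (subspace_sum_of sp s0) sm.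

Lemma triangularP u v w : Mp u -> M0 v -> Mm w -> triangular (u + v + w).
Proof. by move=> Hu Hv Hw; exists (u + v), w; split=> //; exists u, v. Qed.

Lemma triangular_plus u : Mp u -> triangular u.
Proof. by move=> Hu; rewrite -[u]addr0 -[u]addr0; exact: triangularP. Qed.

Lemma triangular_zero v : M0 v -> triangular v.
Proof. by move=> Hv; rewrite -[v]add0r -[_ + v]addr0; exact: triangularP. Qed.

Lemma triangular_minus w : Mm w -> triangular w.
Proof. by move=> Hw; rewrite -[w]add0r -[0]addr0; exact: triangularP. Qed.

Lemma triangular_gen g : triangular (f g).
Proof.
case: g => [i m|i m|i m|]; last exact: triangular_zero.
- by apply: triangular_zero; apply: gen_sub; exists i, m.
- by apply: triangular_plus; apply: gen_sub; exists i, m.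
- by apply: triangular_minus; apply: gen_sub; exists i, m.
Qed.

Lemma triangular_br_gen g y :
  [\/ Mp y, M0 y | Mm y] -> triangular (lie_br (f g) y).
Proof.
have [_ [T1 _]] := rel.
have sum_tri P Q y' : (forall x, P x -> triangular x) -> (forall x, Q x -> triangular x) ->
    sum_of P Q y' -> triangular y'.
  by move=> tP tQ [x1 [x2 [P1 Q2 ->]]]; apply: (subspaceD st); auto.
have gp i m : Mp (f (Gxp i m)) by apply: gen_sub; exists i, m.
have g0 i m : M0 (f (Gh i m)) by apply: gen_sub; exists i, m.
have gm i m : Mm (f (Gxm i m)) by apply: gen_sub; exists i, m.
case: g => [i m|i m|i m|] [Hy|Hy|Hy].
- exact: triangular_plus (zero_br_plus (g0 i m) Hy).
- exact: triangular_zero (gen_br (g0 i m) Hy).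
- exact: triangular_minus (zero_br_minus (g0 i m) Hy).
- exact: triangular_plus (gen_br (gp i m) Hy).
- by rewrite brC; apply: (subspaceN st); exact: triangular_plus (zero_br_plus Hy (gp i m)).
- exact: sum_tri triangular_zero triangular_minus (plus_br_minus _ _ Hy).
- exact: sum_tri triangular_zero triangular_plus (minus_br_plus _ _ Hy).
- rewrite brC; apply: (subspaceN st).
  exact: triangular_minus (zero_br_minus Hy (gm i m)).
- exact: triangular_minus (gen_br (gm i m) Hy).
- by rewrite T1; case: st.
- by rewrite T1; case: st.
- by rewrite T1; case: st.
Qed.

Lemma triangular_span :
  (forall x, lie_generated (fun y => exists g, y = f g) x) -> forall x, triangular x.
Proof.
move=> generated x; apply: (gen_in_ad_stable st _ _ (generated x))
  => [_ [g ->]|_ y [g ->] [z [w [[u [v [Hu Hv ->]]] Hw ->]]]].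
- exact: triangular_gen.
- rewrite !brDr; apply: (subspaceD st); first apply: (subspaceD st).
  all: apply: triangular_br_gen; by [constructor 1|constructor 2|constructor 3].
Qed.
End TriangularSpan.

Section LaurentVanishing.
Variables (C : numFieldType) (V : lmodType C).

(* the Vandermonde matrix of the distinct points 1, ..., E is invertible *)
Lemma vandermonde_vanish (E : nat) (c : 'I_E -> V) :
  (forall k : 'I_E, \sum_(e < E) ((k.+1)%:R ^+ e : C) *: c e = 0) -> forall e, c e = 0.
Proof.
move=> vanish e0.
pose M := Vandermonde E (\row_(j < E) (j.+1)%:R : 'rV[C]_E).
have unitM : M \in unitmx.
  rewrite unitmxE det_Vandermonde unitfE; apply/prodf_neq0 => i _; apply/prodf_neq0 => j ij.
  by rewrite !mxE subr_eq0 eqr_nat eqSS; apply/eqP => /val_inj Eij; rewrite Eij ltnn in ij.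
pose W := invmx M.
have coef_e (e : 'I_E) :
    \sum_(k < E) W k e0 *: ((k.+1%:R ^+ e : C) *: c e) = (M *m W) e e0 *: c e.
  rewrite mxE scaler_suml; apply: eq_bigr => k _.
  by rewrite scalerA /M /Vandermonde !mxE mulrC.
have : \sum_(k < E) W k e0 *: (\sum_(e < E) ((k.+1)%:R ^+ e : C) *: c e) = c e0.
  under eq_bigr do rewrite scaler_sumr.
  rewrite exchange_big /=; under eq_bigr do rewrite coef_e.
  rewrite mulmxV // (bigD1 e0) //= big1 ?addr0; first by rewrite mxE eqxx scale1r.
  by move=> e ne; rewrite mxE (negbTE ne) scale0r.
by move=> <-; apply: big1 => k _; rewrite vanish scaler0.
Qed.

Lemma poly_components_vanish (I : eqType) (r : seq I) (deg : I -> nat) (F : I -> V) :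
  (forall k : nat, \sum_(p <- r) ((k.+1)%:R ^+ deg p : C) *: F p = 0) ->
  forall P : pred nat, \sum_(p <- r | P (deg p)) F p = 0.
Proof.
move=> vanish P; pose E := (\max_(p <- r) deg p).+1.
have deg_lt p : p \in r -> (deg p < E)%N by move=> pr; rewrite ltnS (leq_bigmax_seq _ pr).
have by_degree (G : I -> V) :
    \sum_(p <- r) G p = \sum_(e < E) \sum_(p <- r | deg p == e) G p.
  rewrite big_seq (partition_big (fun p => inord (deg p) : 'I_E) xpredT) //.
  apply: eq_bigr => e _; rewrite [RHS]big_seq_cond; apply: eq_bigl => p.
  by case pr: (p \in r) => //=; rewrite -(inj_eq val_inj) /= inordK ?deg_lt.
pose c (e : 'I_E) := \sum_(p <- r | deg p == e) F p.
have c0 : forall e, c e = 0.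
  apply: (@vandermonde_vanish E c) => k; rewrite -[RHS](vanish k) by_degree.
  by apply: eq_bigr => e _; rewrite scaler_sumr; apply: eq_bigr => p /eqP ->.
rewrite big_mkcond by_degree big1 // => e _.
case Pe: (P e); last by apply: big1 => p /eqP ->; rewrite Pe.
by rewrite -[RHS](c0 e); apply: eq_bigr => p /eqP ->; rewrite Pe.
Qed.

Lemma laurent_components_vanish (r : seq (int * V)) :
  (forall t : C, t != 0 -> \sum_(p <- r) t ^ p.1 *: p.2 = 0) ->
  forall P : pred int, \sum_(p <- r | P p.1) p.2 = 0.
Proof.
move=> vanish P; pose D := \max_(p <- r) `|p.1|%N.
pose deg (p : int * V) := absz (p.1 + D%:Z).
have degE p : p \in r -> (deg p)%:Z = p.1 + D%:Z.
  move=> pr; have : (absz p.1 <= D)%N.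
    exact: (leq_bigmax_seq (P := xpredT) (F := fun p : int * V => absz p.1) p pr isT).
  by rewrite /deg; move: (p.1 : int) => x; clearbody D; lia.
have -> : \sum_(p <- r | P p.1) p.2 = \sum_(p <- r | P ((deg p)%:Z - D%:Z)) p.2.
  rewrite big_seq_cond [RHS]big_seq_cond; apply: eq_bigl => p.
  by case pr: (p \in r) => //=; rewrite degE // addrK.
apply: (poly_components_vanish (deg := deg) _ (fun e => P (e%:Z - D%:Z))) => k.
have k0 : (k.+1)%:R != 0 :> C by rewrite pnatr_eq0.
rewrite -[RHS](scaler0 _ ((k.+1)%:R ^+ D)) -[in RHS](vanish _ k0) scaler_sumr.
rewrite big_seq [RHS]big_seq.
by apply: eq_bigr => p pr; rewrite scalerA exprnP degE // expfzDr // -exprnP mulrC.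
Qed.
Lemma sign_components_vanish (s1 s2 : seq (int * V)) (v : V) :
  all (fun p => 0 < p.1) s1 -> all (fun p => p.1 < 0) s2 ->
  (forall t : C, t != 0 ->
     \sum_(p <- s1) t ^ p.1 *: p.2 + v + \sum_(p <- s2) t ^ p.1 *: p.2 = 0) ->
  [/\ \sum_(p <- s1) p.2 = 0, v = 0 & \sum_(p <- s2) p.2 = 0].
Proof.
move=> pos1 neg2 vanish; set s := s1 ++ (0, v) :: s2.
have comp := @laurent_components_vanish s.
have component P : \sum_(p <- s | P p.1) p.2 =
    \sum_(p <- s1 | P p.1) p.2 + (if P 0 then v else 0) + \sum_(p <- s2 | P p.1) p.2.
  by rewrite big_cat big_cons /= -addrA; case: (P 0); rewrite ?add0r.
have sum_all (P : pred int) (r : seq (int * V)) :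
    all (fun p => P p.1) r -> \sum_(p <- r | P p.1) p.2 = \sum_(p <- r) p.2.
  by move=> allP; rewrite -big_filter (all_filterP allP).
have sum_none (P : pred int) (r : seq (int * V)) :
    all (fun p => ~~ P p.1) r -> \sum_(p <- r | P p.1) p.2 = 0.
  by move=> noneP; apply: big_hasC; rewrite -all_predC.
have {}comp P : \sum_(p <- s | P p.1) p.2 = 0.
  apply: comp => t t0; rewrite -[RHS](vanish t t0) /s big_cat big_cons /=.
  by rewrite expr0z scale1r addrA.
split.
- have := component (fun e => 0 < e); rewrite (comp (fun e => 0 < e)) /= addr0.
  rewrite (sum_all _ _ pos1) (sum_none (fun e => 0 < e) s2) ?addr0 //.
  by apply: sub_all neg2 => p /lt_gtF ->.
- have := component (fun e => e == 0); rewrite (comp (fun e => e == 0)) /=.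
  rewrite (sum_none (fun e => e == 0) s1) ?(sum_none (fun e => e == 0) s2).
  + by rewrite add0r addr0.
  + by apply: sub_all neg2 => p /lt_eqF ->.
  + by apply: sub_all pos1 => p /gt_eqF ->.
- have := component (fun e => e < 0); rewrite (comp (fun e => e < 0)) /= addr0.
  rewrite (sum_all (fun e => e < 0) _ neg2) (sum_none (fun e => e < 0) s1) ?add0r //.
  by apply: sub_all pos1 => p /lt_gtF ->.
Qed.
End LaurentVanishing.

(* Elements of a subalgebra generated by homogeneous elements are finite sums
   of homogeneous pieces; we record them as lists of (degree, piece). *)
Section Expansions.
Variables (C : fieldType) (L : lieAlgebra C).

Definition expand (s : seq (int * L)) (t : C) : L := \sum_(p <- s) t ^ p.1 *: p.2.

Lemma expand1 s : expand s 1 = \sum_(p <- s) p.2.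
Proof. by apply: eq_bigr => p _; rewrite exp1rz scale1r. Qed.

Lemma expand_lin b s1 s2 t :
  b *: expand s1 t + expand s2 t = expand ([seq (p.1, b *: p.2) | p <- s1] ++ s2) t.
Proof.
rewrite /expand big_cat big_map scaler_sumr; congr (_ + _).
by apply: eq_bigr => p _; rewrite !scalerA mulrC.
Qed.

Lemma expand_br s1 s2 t : t != 0 ->
  lie_br (expand s1 t) (expand s2 t) =
  expand [seq (p.1 + q.1, lie_br p.2 q.2) | p <- s1, q <- s2] t.
Proof.
move=> t0; rewrite /expand big_allpairs_dep brsuml; apply: eq_bigr => p _.
rewrite brsumr; apply: eq_bigr => q _.
by rewrite brZl brZr scalerA expfzDr // mulrC.
Qed.

(* [graded t phi]: phi is an automorphism scaling the degree-d part by t ^ d *)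
Variable graded : C -> (L -> L) -> Prop.
Hypothesis graded_hom : forall t phi, graded t phi -> lie_hom phi.
Hypothesis graded_unit : forall t phi, graded t phi -> t != 0.

Lemma gen_expansion S (d : int) : d != 0 ->
  (forall t phi y, graded t phi -> S y -> phi y = t ^ d *: y) ->
  forall x, lie_generated S x ->
  exists s, [/\ all (fun p => 0 < p.1 * d) s, x = expand s 1 &
                forall t phi, graded t phi -> phi x = expand s t].
Proof.
move=> d0 S_deg; apply: gen_ind.
- exists [::]; split=> //; first by rewrite /expand big_nil.
  by move=> t phi gr; rewrite /expand big_nil (hom0 (graded_hom gr)).
- move=> b x y _ _ [s1 [pos1 -> phi1]] [s2 [pos2 -> phi2]].
  exists ([seq (p.1, b *: p.2) | p <- s1] ++ s2); split; last 1 first.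
  + move=> t phi gr; have hphi := graded_hom gr.
    by rewrite -expand_lin (homD hphi) (homZ hphi) (phi1 _ _ gr) (phi2 _ _ gr).
  + by rewrite all_cat all_map pos2 andbT.
  + by rewrite -expand_lin.
- move=> x y _ _ [s1 [pos1 -> phi1]] [s2 [pos2 -> phi2]].
  exists [seq (p.1 + q.1, lie_br p.2 q.2) | p <- s1, q <- s2]; split.
  + apply/allP => _ /allpairsP [[p q] [/= p1 q2 ->]] /=.
    by rewrite mulrDl addr_gt0 ?(allP pos1 _ p1) ?(allP pos2 _ q2).
  + by rewrite -expand_br ?oner_neq0.
  + move=> t phi gr; rewrite -expand_br ?(graded_unit gr) //.
    by rewrite (homBr (graded_hom gr)) (phi1 _ _ gr) (phi2 _ _ gr).
- move=> y Sy; exists [:: (d, y)]; split; first by rewrite /= andbT; nia.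
  + by rewrite expand1 big_seq1.
  + by move=> t phi gr; rewrite /expand big_seq1 (S_deg _ _ _ gr Sy).
Qed.
End Expansions.

Lemma hom_fix_gen (R : fieldType) (L : lieAlgebra R) (S : L -> Prop) (phi : L -> L) :
  lie_hom phi -> (forall y, S y -> phi y = y) ->
  forall x, lie_generated S x -> phi x = x.
Proof.
move=> hphi S_fix; apply: gen_ind => //; first exact: hom0.
- by move=> b x y _ _ ex ey; rewrite (homD hphi) (homZ hphi) ex ey.
- by move=> x y _ _ ex ey; rewrite (homBr hphi) ex ey.
Qed.

Section Directness.
Variables (C : numFieldType) (n : nat) (A : 'M[int]_n) (a av : 'I_n -> nat)
  (mu : {perm 'I_n}) (xi : C) (L : lieAlgebra C) (f : Mgen n -> L).
Hypothesis pres : is_M_presentation A a av mu xi f.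

Definition grading (t : C) (phi : L -> L) : Prop :=
  [/\ t != 0, lie_hom phi & forall g, phi (f g) = rescale f t g].

Lemma grading_exists t : t != 0 -> exists phi, grading t phi.
Proof.
move=> t0; have [rel univ] := pres.
by have [phi [hphi phi_f _]] := univ L _ (rescale_relations t0 rel); exists phi.
Qed.

(* u + v + w = 0 forces u = v = w = 0: apply phi_t to the expansions of u and
   w and use sign_components_vanish *)
Lemma triangular_direct u v w :
  M_plus f u -> M_zero f v -> M_minus f w -> u + v + w = 0 ->
  [/\ u = 0, v = 0 & w = 0].
Proof.
move=> Hu Hv Hw Euvw.
have gr_hom t phi : grading t phi -> lie_hom phi by case.
have gr_unit t phi : grading t phi -> t != 0 by case.
have deg_plus t phi y :
    grading t phi -> (exists i m, y = f (Gxp i m)) -> phi y = t ^ 1 *: y.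
  by case=> _ _ phi_f [i [m ->]]; rewrite phi_f expr1z.
have deg_minus t phi y :
    grading t phi -> (exists i m, y = f (Gxm i m)) -> phi y = t ^ (-1) *: y.
  by case=> _ _ phi_f [i [m ->]]; rewrite phi_f.
have [s1 [pos1 u_exp phi_u]] := gen_expansion gr_hom gr_unit (d := 1) isT deg_plus Hu.
have [s2 [neg2 w_exp phi_w]] := gen_expansion gr_hom gr_unit (d := -1) isT deg_minus Hw.
have phi_v t phi : grading t phi -> phi v = v.
  by case=> _ hphi phi_f; apply: (hom_fix_gen hphi) Hv => _ [i [m ->]]; rewrite phi_f.
have {}pos1 : all (fun p => 0 < p.1) s1 by apply: sub_all pos1 => p; rewrite mulr1.
have {}neg2 : all (fun p => p.1 < 0) s2.
  by apply: sub_all neg2 => p; rewrite mulrN1 oppr_gt0.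
rewrite u_exp w_exp !expand1; apply: sign_components_vanish pos1 neg2 _ => t t0.
have [phi gr] := grading_exists t0; have hphi := gr_hom _ _ gr.
move: (congr1 phi Euvw); rewrite !(homD hphi) (hom0 hphi).
by rewrite (phi_u _ _ gr) (phi_w _ _ gr) (phi_v _ _ gr).
Qed.
End Directness.

Section OrbitSums.
Variables (n : nat) (mu : {perm 'I_n}).

Lemma perm_expS q i : (mu ^+ q.+1)%g i = mu ((mu ^+ q)%g i).
Proof. by rewrite expgSr permM. Qed.

Lemma orbit_sum_shift (R : nmodType) (F : 'I_n -> R) x p :
  \sum_(q < #[mu]%g) F ((mu ^+ q)%g ((mu ^+ p)%g x)) = \sum_(q < #[mu]%g) F ((mu ^+ q)%g x).
Proof.
elim: p x => [|p IH] x; first by rewrite expg0 perm1.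
rewrite perm_expS -[RHS]IH; set y := (mu ^+ p)%g x.
case: #[mu]%g (expg_order mu) => [|N] muN; first by rewrite !big_ord0.
rewrite big_ord_recr [RHS]big_ord_recl /= addrC; congr (_ + _).
- by rewrite -permM -expgS muN expg0 perm1.
- by apply: eq_bigr => q _; rewrite /bump /= -permM -expgS.
Qed.
End OrbitSums.

Section AffineOrbits.
Variables (n : nat) (A : 'M[int]_n) (mu : {perm 'I_n}).
Hypothesis auto : diagram_auto A mu.

Lemma diagram_auto_exp p i j : A ((mu ^+ p)%g i) ((mu ^+ p)%g j) = A i j.
Proof. by elim: p => [|p IH]; rewrite ?expg0 ?perm1 // !perm_expS auto. Qed.

Definition orbit_pairing (i : 'I_n) : int := \sum_(q < #[mu]%g) A i ((mu ^+ q)%g i).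

Lemma orbit_pairing_exp p i : orbit_pairing ((mu ^+ p)%g i) = orbit_pairing i.
Proof.
apply: eq_bigr => q _.
by rewrite -permM -expgD addnC expgD permM diagram_auto_exp.
Qed.

Let Aq : 'M[rat]_n := map_mx (fun z : int => z%:~R) A.

(* for an affine matrix, A v <= 0 forces A v = 0 (apply the defining
   property to - v) *)
Lemma affine_nonpos_image (v : 'cV[rat]_n) :
  is_affine_GCM A -> (forall k, (Aq *m v) k 0 <= 0) -> Aq *m v = 0.
Proof.
move=> [_ _ _ _ Apos] nonpos; apply/eqP; rewrite -oppr_eq0 -mulmxN; apply/eqP.
by apply: Apos => k; rewrite mulmxN mxE oppr_ge0.
Qed.

Lemma mul_orbit_vector i0 k :
  (Aq *m \col_j (\sum_(q < #[mu]%g) ((mu ^+ q)%g i0 == j))%:R) k 0 =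
  (\sum_(q < #[mu]%g) A k ((mu ^+ q)%g i0))%:~R.
Proof.
rewrite !mxE rmorph_sum; under eq_bigr do rewrite !mxE natr_sum mulr_sumr.
rewrite exchange_big /=; apply: eq_bigr => q _.
rewrite (bigD1 ((mu ^+ q)%g i0)) //= eqxx mulr1 big1 ?addr0 // => j nj.
by rewrite eq_sym (negbTE nj) mulr0.
Qed.

(* if the orbit of i0 is not everything, the orbit pairing of i0 is positive:
   otherwise A maps the orbit vector to a vector <= 0, hence to 0, which
   indecomposability contradicts at a vertex linked to the orbit *)
Lemma orbit_pairing_gt0 i0 j0 :
  is_affine_GCM A -> (forall k, (mu ^+ k)%g i0 != j0) -> 0 < orbit_pairing i0.
Proof.
move=> Aaff not_dense; have [[_ Aoff Asym] Aind _ _ _] := Aaff.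
rewrite ltNge; apply/negP => le0; set N := #[mu]%g.
pose S := [set j | [exists q : 'I_N, (mu ^+ q)%g i0 == j]].
have i0S : i0 \in S.
  by rewrite inE; apply/existsP; exists (Ordinal (order_gt0 mu)); rewrite expg0 perm1.
have S_proper : S != setT.
  apply/negP => /eqP ST; move: (in_setT j0); rewrite -ST inE => /existsP [q /eqP E].
  by move: (not_dense q); rewrite E eqxx.
have row_le0 k : \sum_(q < N) A k ((mu ^+ q)%g i0) <= 0.
  case: (boolP (k \in S)) => [|kS].
    rewrite inE => /existsP [p /eqP <-].
    by rewrite -(orbit_sum_shift _ _ i0 p) -/(orbit_pairing _) orbit_pairing_exp.
  apply: sumr_le0 => q _; apply: Aoff; apply: contraNneq kS => ->.
  by rewrite inE; apply/existsP; exists q.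
pose v : 'cV[rat]_n := \col_j (\sum_(q < N) ((mu ^+ q)%g i0 == j))%:R.
have Av0 : Aq *m v = 0.
  by apply: affine_nonpos_image => // k; rewrite mul_orbit_vector lerz0.
have [|i [j [iS jS Aij]]] := Aind S _ S_proper; first by apply/set0Pn; exists i0.
move: iS; rewrite inE => /existsP [q /eqP iq].
have Aji : A j i < 0.
  rewrite lt_neqAle; apply/andP; split; first by apply: contra Aij => /eqP/Asym ->.
  by apply: Aoff; apply: contraNneq jS => ->; rewrite -iq inE; apply/existsP; exists q.
have rest_le0 : \sum_(k < N | k != q) A j ((mu ^+ k)%g i0) <= 0.
  apply: sumr_le0 => k _; apply: Aoff; apply: contraNneq jS => ->.
  by rewrite inE; apply/existsP; exists k.
have := mul_orbit_vector i0 j; rewrite -/v Av0 mxE (bigD1 q) //= iq => /esym/eqP.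
rewrite intr_eq0 => /eqP; move: rest_le0 Aji.
by set rest := \sum_(k < N | k != q) _; lia.
Qed.
End AffineOrbits.

(* some vertex i has a positive orbit sum of <alpha_i^vee, alpha_{mu^q i}^vee>:
   take i in a proper orbit maximising a_j / a_j^vee, so that each term is at
   least (a_i / a_i^vee) a_{i, mu^q i}, and use orbit_pairing_gt0 *)
Lemma exists_orbit_coroot_form_gt0 (n : nat) (A : 'M[int]_n) (a av : 'I_n -> nat)
    (mu : {perm 'I_n}) :
  is_affine_GCM A -> marks_of A a -> comarks_of A av -> diagram_auto A mu ->
  not_transitive mu ->
  exists i, 0 < \sum_(q < #[mu]%g) coroot_form A a av rat i ((mu ^+ q)%g i).
Proof.
move=> Aaff [a_gt0 _ _] [av_gt0 _ _] auto [i0 [j0 not_dense]].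
have [[_ Aoff _] _ _ _ _] := Aaff; set N := #[mu]%g.
have N_gt0 : (0 < N)%N := order_gt0 mu.
pose ratio (j : 'I_n) : rat := (a j)%:R / (av j)%:R.
have ratio_gt0 j : 0 < ratio j by rewrite divr_gt0 // ltr0n.
have [q0 _ ratio_max] := @arg_maxP _ rat _ (Ordinal N_gt0) xpredT
  (fun q : 'I_N => ratio ((mu ^+ q)%g i0)) isT.
exists ((mu ^+ q0)%g i0); set i := (mu ^+ q0)%g i0.
apply: (@lt_le_trans _ _ (ratio i * (orbit_pairing A mu i)%:~R)).
  by rewrite mulr_gt0 // ltr0z orbit_pairing_exp // (orbit_pairing_gt0 auto Aaff not_dense).
rewrite /orbit_pairing rmorph_sum mulr_sumr; apply: ler_sum => q _.
set k := (mu ^+ q)%g i; case: (eqVneq k i) => [->|ki]; first by [].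
have Aik : (A i k)%:~R <= 0 :> rat by rewrite lerz0; apply: Aoff; rewrite eq_sym.
apply: ler_wnM2r => //.
have -> : k = (mu ^+ ((q0 + q) %% N))%g i0 by rewrite expg_mod_order expgD permM.
exact: (ratio_max (Ordinal (ltn_pmod _ N_gt0))).
Qed.

(* relation (T2) for [h_{i,N}, h_{i,-N}] expresses c as a nonzero multiple of
   a bracket in M^0 *)
Lemma central_in_zero (C : numFieldType) n (A : 'M[int]_n) a av mu (xi : C)
    (L : lieAlgebra C) (f : Mgen n -> L) :
  is_affine_GCM A -> marks_of A a -> comarks_of A av -> diagram_auto A mu ->
  not_transitive mu -> (ordN mu).-primitive_root xi -> M_relations A a av mu xi f ->
  M_zero f (f (Gc n)).
Proof.
move=> Aaff marks comarks auto not_trans xi_prim [_ [_ [T2 _]]].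
have [i form_gt0] := exists_orbit_coroot_form_gt0 Aaff marks comarks auto not_trans.
set s := \sum_(q < _) _ in form_gt0.
have N_gt0 : (0 < ordN mu)%N := order_gt0 mu.
have bracket : lie_br (f (Gh i (ordN mu))) (f (Gh i (- (ordN mu)%:Z))) =
    (((ordN mu)%:Z * (ordN mu)%:Z)%:~R * ratr s) *: f (Gc n).
  rewrite T2 subrr eqxx /s rmorph_sum mulr_sumr; congr (_ *: _); apply: eq_bigr => q _.
  rewrite -PoszM -exprnP mulnC exprM (prim_expr_order xi_prim) expr1n !mulr1.
  by rewrite /coroot_form !rmorphM /= fmorphV /= !ratr_nat ratr_int.
have coef_neq0 : ((ordN mu)%:Z * (ordN mu)%:Z)%:~R * ratr s != 0 :> C.
  rewrite mulf_neq0 //; first by rewrite intr_eq0 mulf_neq0 // -lt0n.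
  by rewrite fmorph_eq0 lt0r_neq0.
rewrite -[f (Gc n)](scalerK coef_neq0) -bracket.
apply: (subspaceZ (gen_subspace _)); apply: gen_br; apply: gen_sub.
  by exists i, (ordN mu).
by exists i, (- (ordN mu)%:Z).
Qed.

Theorem mainTheorem16 (C : numClosedFieldType) (l : nat) (A : 'M[int]_l.+1)
    (a av : 'I_l.+1 -> nat) (mu : {perm 'I_l.+1}) (xi : C)
    (L : lieAlgebra C) (f : Mgen l.+1 -> L) :
  is_affine_GCM A -> marks_of A a -> comarks_of A av ->
  diagram_auto A mu -> not_transitive mu ->
  (ordN mu).-primitive_root xi ->
  is_M_presentation A a av mu xi f ->
  direct_sum3 (M_plus f) (M_zero f) (M_minus f).
Proof.
move=> Aaff marks comarks auto not_trans xi_prim pres.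
have c_zero := central_in_zero Aaff marks comarks auto not_trans xi_prim (proj1 pres).
have span := triangular_span (proj1 pres) c_zero (presentation_generated pres).
split=> [x|u v w]; last exact: (@triangular_direct C _ _ _ _ _ _ L f pres).
by have [_ [w [[u [v [Hu Hv ->]]] Hw ->]]] := span x; exists u, v, w.
Qed.
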